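(* Let $H$ be a finite graph with an edge $(x,y)$ such that $\mathrm{Aut}(H;xy)\ne\mathrm{Aut}(H;x,y)$. Then for every positive integer $k$, $$D_2(H,k;xy)=\binom{k}{2}\frac{D(H,k;x,y)}{k^2}\quad\text{and}\quad D_1(H,k;xy)=D(H,k;xy)-\frac{(k-1)\,D(H,k;x,y)}{2k}.$$
   Context: A $k$-labeling of $H$ is a map $\phi:V(H)\to\{1,\dots,k\}$; an automorphism $\pi$ preserves $\phi$ if $\phi(\pi(v))=\phi(v)$ for all $v$. For a subgroup $\Gamma\le\mathrm{Aut}(H)$, $\phi$ is $\Gamma$-distinguishing if the only element of $\Gamma$ preserving $\phi$ is the identity; $\phi,\phi'$ are equivalent with respect to $\Gamma$ if some $\pi\in\Gamma$ satisfies $\phi'(\pi(v))=\phi(v)$ for all $v$; $D(H,k;\Gamma)$ is the number of $\Gamma$-equivalence classes of $\Gamma$-distinguishing $k$-labelings. $\mathrm{Aut}(H;x,y)$ is the group of automorphisms fixing both $x$ and $y$; $\mathrm{Aut}(H;xy)$ is the group of automorphisms mapping the set $\{x,y\}$ to itself. $D(H,k;x,y):=D(H,k;\mathrm{Aut}(H;x,y))$, $D(H,k;xy):=D(H,k;\mathrm{Aut}(H;xy))$. $D_1(H,k;xy)$ (resp. $D_2(H,k;xy)$) is the number of those $\mathrm{Aut}(H;xy)$-equivalence classes of $\mathrm{Aut}(H;xy)$-distinguishing $k$-labelings in which $x$ and $y$ receive the same label (resp. different labels). *)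

From mathcomp Require Import all_boot all_order all_algebra all_fingroup.
Set Implicit Arguments. Unset Strict Implicit. Unset Printing Implicit Defensive.

Section Distinguishing.
Variable T : finType.

Definition simple_graph (e : rel T) := symmetric e /\ irreflexive e.

Definition Aut (e : rel T) : {set {perm T}} :=
  [set p : {perm T} | [forall u, forall v, e (p u) (p v) == e u v]].

Definition Aut_fix2 (e : rel T) (x y : T) : {set {perm T}} :=
  [set p in Aut e | (p x == x) && (p y == y)].

Definition Aut_edge (e : rel T) (x y : T) : {set {perm T}} :=
  [set p in Aut e | p @: [set x; y] == [set x; y]].

(* k-labelings: maps V(H) -> {1..k}, represented by 'I_k = {0..k-1}. *)
Definition labeling (k : nat) := {ffun T -> 'I_k}.

Definition preserves k (p : {perm T}) (phi : labeling k) :=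
  [forall v, phi (p v) == phi v].

Definition distinguishing k (G : {set {perm T}}) (phi : labeling k) :=
  [forall p in G, preserves p phi ==> (p == 1%g)].

Definition equiv_lab k (G : {set {perm T}}) (phi phi' : labeling k) :=
  [exists p in G, [forall v, phi' (p v) == phi v]].

Definition dist_set k (G : {set {perm T}}) : {set labeling k} :=
  [set phi | distinguishing G phi].

Definition eq_class k (G : {set {perm T}}) (phi : labeling k) : {set labeling k} :=
  [set phi' in dist_set k G | equiv_lab G phi phi'].

Definition Dcount k (G : {set {perm T}}) : nat :=
  #|[set eq_class G phi | phi in dist_set k G]|.

Definition D_fix2 (e : rel T) k x y := Dcount k (Aut_fix2 e x y).
Definition D_edge (e : rel T) k x y := Dcount k (Aut_edge e x y).

Definition D1_edge (e : rel T) k x y : nat :=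
  #|[set eq_class (Aut_edge e x y) phi |
      phi in [set phi in dist_set k (Aut_edge e x y) | phi x == phi y]]|.
Definition D2_edge (e : rel T) k x y : nat :=
  #|[set eq_class (Aut_edge e x y) phi |
      phi in [set phi in dist_set k (Aut_edge e x y) | phi x != phi y]]|.

End Distinguishing.

From Pilot Require Import Defs.
From mathcomp Require Import all_boot all_order all_algebra all_fingroup ring.
Set Implicit Arguments. Unset Strict Implicit. Unset Printing Implicit Defensive.
Import GRing.Theory Num.Theory.

(* Write K := Aut(H;x,y) and G := Aut(H;xy).  K is the stabiliser of x in G and G
   moves x to y, so [G : K] = 2.  Both groups act freely on their distinguishing
   labelings, so each class count is a number of labelings divided by the group
   order.  A labeling with different labels on x and y is not preserved by an
   element swapping x and y, so it is G-distinguishing iff it is K-distinguishing;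
   counting these gives 2|K| D_2 = (1 - 1/k) |K| D(H,k;x,y). *)

Section LabelingAction.
Variables (T : finType) (k : nat).

Definition relabel (phi : labeling T k) (p : {perm T}) : labeling T k :=
  [ffun v => phi ((p^-1)%g v)].

Lemma relabel1 : relabel^~ 1%g =1 id.
Proof. by move=> phi; apply/ffunP=> v; rewrite ffunE invg1 perm1. Qed.

Lemma relabelM phi : act_morph relabel phi.
Proof. by move=> p q; apply/ffunP=> v; rewrite !ffunE invMg permM. Qed.

Canonical relabel_action := TotalAction relabel1 relabelM.

Local Notation rl := relabel_action.

Lemma relabelE phi p v : rl phi p v = phi ((p^-1)%g v).
Proof. by rewrite /= ffunE. Qed.

Lemma eq_relabel phi psi (p : {perm T}) :
  (psi == rl phi p) = [forall v, psi (p v) == phi v].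
Proof.
apply/eqP/forallP => [-> v | psi_p]; first by rewrite relabelE permK.
by apply/ffunP=> v; rewrite relabelE; apply/eqP; rewrite -{1}(permKV p v).
Qed.

Lemma preservesE (p : {perm T}) phi : preserves p phi = (rl phi p == phi).
Proof. by rewrite eq_sym eq_relabel. Qed.

Lemma equiv_labE (G : {set {perm T}}) phi psi :
  equiv_lab G phi psi = (psi \in orbit rl G phi).
Proof.
apply/existsP/orbitP => [[p /andP[pG psi_p]] | [p pG <-]].
  by exists p => //; apply/esym/eqP; rewrite eq_relabel.
by exists p; rewrite pG -eq_relabel eqxx.
Qed.

Variable G : {group {perm T}}.

Lemma dist_setE phi :
  (phi \in dist_set k G) = [forall p in G, (rl phi p == phi) ==> (p == 1%g)].
Proof. by rewrite inE; apply/eq_forallb=> p; rewrite preservesE. Qed.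

Lemma astab1_dist phi : phi \in dist_set k G -> ('C_G[phi | rl] = 1)%g.
Proof.
rewrite dist_setE => /forall_inP phi_dist; apply/trivgP/subsetP => p.
move=> /setIP[pG /astab1P fix_p]; rewrite inE.
exact: implyP (phi_dist p pG) (introT eqP fix_p).
Qed.

Lemma dist_set_relabel phi p :
  p \in G -> phi \in dist_set k G -> rl phi p \in dist_set k G.
Proof.
move=> pG; rewrite !dist_setE => /forall_inP phi_dist; apply/forall_inP => q qG.
apply/implyP => /eqP fix_q; rewrite -(conjg_eq1 q p^-1); apply: implyP (phi_dist _ _) _.
  by rewrite groupJ ?groupV.
by rewrite /conjg invgK !actM fix_q actK.
Qed.

Lemma card_eq_classes (A : {set labeling T k}) :
    A \subset dist_set k G -> (forall phi p, p \in G -> phi \in A -> rl phi p \in A) ->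
  #|[set eq_class G phi | phi in A]| * #|G| = #|A|.
Proof.
move=> sAdist A_rel; have actsA : [acts G, on A | rl].
  apply/actsP => p pG phi; apply/idP/idP; last exact: A_rel.
  by move/(A_rel _ _ (groupVr pG)); rewrite actK.
have -> : [set eq_class G phi | phi in A] = orbit rl G @: A.
  apply/eq_in_imset => phi phiA; apply/setP => psi; rewrite inE equiv_labE.
  apply/andP/idP => [[] // | /orbitP[p pG <-]]; split; last exact: mem_orbit.
  exact/dist_set_relabel/(subsetP sAdist).
symmetry; apply: card_uniform_partition (orbit_partition actsA).
by move=> _ /imsetP[phi phiA ->]; rewrite card_orbit astab1_dist ?indexg1 // (subsetP sAdist).
Qed.

Lemma Dcount_mul_card : Dcount k G * #|G| = #|dist_set k G|.
Proof. exact: card_eq_classes (subxx _) (@dist_set_relabel). Qed.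

Lemma card_eq_classes_setId (P : pred (labeling T k)) :
    (forall phi p, p \in G -> P (rl phi p) = P phi) ->
  #|[set eq_class G phi | phi in [set phi in dist_set k G | P phi]]| * #|G|
  = #|[set phi in dist_set k G | P phi]|.
Proof.
move=> P_rl; apply: card_eq_classes => [|phi p pG]; first by apply/subsetP => phi /setIdP[].
by move=> /setIdP[phi_dist P_phi]; apply/setIdP; rewrite P_rl // dist_set_relabel.
Qed.

End LabelingAction.

Section EdgeStabilizers.
Variables (T : finType) (e : rel T) (x y : T).

Lemma Aut_group_set : group_set (Defs.Aut e).
Proof.
apply/group_setP; split=> [|p q]; rewrite !inE.
  by apply/forallP=> u; apply/forallP=> v; rewrite !perm1.
move=> /forallP Ap /forallP Aq; apply/forallP=> u; apply/forallP=> v.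
by rewrite !permM (eqP (forallP (Aq (p u)) (p v))) (forallP (Ap u) v).
Qed.

Canonical Aut_group := Group Aut_group_set.

Lemma Aut_fix2E : Aut_fix2 e x y = (Defs.Aut e :&: 'C[x | 'P] :&: 'C[y | 'P])%g.
Proof.
by apply/setP=> p; rewrite /Aut_fix2 !inE /= !sub1set !inE andbA.
Qed.

Lemma Aut_edgeE : Aut_edge e x y = (Defs.Aut e :&: 'N([set x; y] | 'P))%g.
Proof.
apply/setP=> p; rewrite /Aut_edge in_setI inE -astab1_set.
by congr (_ && _); apply/eqP/astab1P.
Qed.

Canonical Aut_fix2_group := Group (etrans (congr1 group_set Aut_fix2E) (groupP _)).
Canonical Aut_edge_group := Group (etrans (congr1 group_set Aut_edgeE) (groupP _)).

Lemma Aut_edge_fix_or_swap p : p \in Aut_edge e x y ->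
  (p x = x /\ p y = y) \/ (p x = y /\ p y = x).
Proof.
rewrite inE => /andP[_ /eqP p_xy].
have: p x \in [set x; y] /\ p y \in [set x; y].
  by split; rewrite -p_xy imset_f ?set21 ?set22.
rewrite !inE => -[/orP[]/eqP px /orP[]/eqP py]; [left | by left | by right | right];
  by split=> //; rewrite py; apply: (@perm_inj _ p); rewrite px py.
Qed.

Lemma Aut_fix2_fix p : p \in Aut_fix2 e x y -> p x = x /\ p y = y.
Proof. by rewrite inE => /and3P[_ /eqP px /eqP py]. Qed.

Lemma Aut_fix2_sub_edge : Aut_fix2 e x y \subset Aut_edge e x y.
Proof.
apply/subsetP=> p pK; have [px py] := Aut_fix2_fix pK; move: pK; rewrite !inE => /andP[-> _].
by rewrite imsetU1 imset_set1 px py eqxx.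
Qed.

Hypothesis xy : x != y.

Lemma Aut_edge_fix_sub p : p \in Aut_edge e x y -> p x = x -> p \in Aut_fix2 e x y.
Proof.
move=> pG px; have [[_ py] | [pxy _]] := Aut_edge_fix_or_swap pG.
  by move: pG; rewrite !inE px py !eqxx => /andP[-> _].
by move: xy; rewrite -pxy px eqxx.
Qed.

Lemma astab1_Aut_edge : ('C_(Aut_edge e x y)[x | 'P] = Aut_fix2 e x y)%g.
Proof.
apply/eqP; rewrite eqEsubset; apply/andP; split; apply/subsetP=> p.
  by case/setIP=> pG /astab1P; apply: Aut_edge_fix_sub.
move=> pK; rewrite inE (subsetP Aut_fix2_sub_edge) //=; apply/astab1P.
by have [] := Aut_fix2_fix pK.
Qed.

Lemma card_Aut_edge : Aut_edge e x y != Aut_fix2 e x y ->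
  #|Aut_edge e x y| = 2 * #|Aut_fix2 e x y|.
Proof.
move=> GneK; have [s sG sK] : exists2 s, s \in Aut_edge e x y & s \notin Aut_fix2 e x y.
  by apply/subsetPn; rewrite eqEsubset Aut_fix2_sub_edge andbT in GneK.
have sx : s x = y.
  have [[sx _] | [-> //]] := Aut_edge_fix_or_swap sG.
  by case/negP: sK; apply: Aut_edge_fix_sub.
have orbit_x : orbit 'P (Aut_edge e x y) x = [set x; y].
  apply/setP=> z; apply/orbitP/set2P => [[p pG <-] | [-> | ->]].
  - rewrite /= apermE.
    by have [[-> _] | [-> _]] := Aut_edge_fix_or_swap pG; [left | right].
  - by exists 1%g; rewrite ?group1 ?act1.
  - by exists s.
rewrite -(Lagrange Aut_fix2_sub_edge) mulnC; congr (_ * _).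
by have := card_orbit 'P (Aut_edge e x y) x; rewrite orbit_x cards2 xy astab1_Aut_edge.
Qed.

End EdgeStabilizers.

Lemma card_sum_fibers (X Y : finType) (f : X -> Y) (A : {set X}) :
  #|A| = \sum_(b : Y) #|[set a in A | f a == b]|.
Proof.
rewrite -sum1_card (partition_big f predT) //=; apply: eq_bigr => b _.
by rewrite -sum1_card; apply: eq_bigl => a; rewrite !inE.
Qed.

Section FixedPairRelabel.
Variables (T : finType) (k : nat) (K : {group {perm T}}) (x y : T).
Hypothesis xy : x != y.
Hypothesis K_fix : forall p, p \in K -> p x = x /\ p y = y.

Definition relabel2 (a b : 'I_k) (phi : labeling T k) : labeling T k :=
  [ffun v => if v == x then a else if v == y then b else phi v].

Lemma preserves_relabel2 a b phi p :
  p \in K -> preserves p (relabel2 a b phi) = preserves p phi.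
Proof.
move=> /K_fix[px py]; apply/eq_forallb => v; rewrite !ffunE.
have [-> | vx] := eqVneq v x; first by rewrite px !eqxx.
have [vy | vy] := eqVneq v y; first by subst v; rewrite py (negbTE vx) !eqxx.
by rewrite -{1}px -{1}py !(inj_eq perm_inj) (negbTE vx) (negbTE vy).
Qed.

Lemma distinguishing_relabel2 a b phi :
  distinguishing K (relabel2 a b phi) = distinguishing K phi.
Proof.
apply/eq_forallb => p.
by case pK: (p \in K); rewrite //= preserves_relabel2.
Qed.

Definition dist_fiber (a b : 'I_k) :=
  [set phi in dist_set k K | (phi x == a) && (phi y == b)].

Lemma card_dist_fiber a b a' b' : #|dist_fiber a b| = #|dist_fiber a' b'|.
Proof.
suff le_fiber c d c' d' : #|dist_fiber c d| <= #|dist_fiber c' d'|.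
  by apply/eqP; rewrite eqn_leq !le_fiber.
have yx : (y == x) = false by rewrite eq_sym (negbTE xy).
rewrite -(@card_in_imset _ _ (relabel2 c' d')).
  apply/subset_leq_card/subsetP => _ /imsetP[phi + ->].
  by rewrite !inE distinguishing_relabel2 !ffunE yx !eqxx => /andP[-> _].
move=> phi psi; rewrite !inE => /and3P[_ /eqP phix /eqP phiy] /and3P[_ /eqP psix /eqP psiy].
move=> /ffunP eq_relabel2; apply/ffunP => v; have := eq_relabel2 v; rewrite !ffunE.
case: eqVneq => [-> _ | _]; first by rewrite phix psix.
by case: eqVneq => [-> _ | _ //]; rewrite phiy psiy.
Qed.

Lemma card_dist_set_diag :
  #|dist_set k K| = k * #|[set phi in dist_set k K | phi x == phi y]|.
Proof.
rewrite (card_sum_fibers (fun phi : labeling T k => phi x)).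
rewrite (card_sum_fibers (fun phi : labeling T k => phi x) [set _ in _ | _]).
rewrite big_distrr /=; apply: eq_bigr => a _.
rewrite (card_sum_fibers (fun phi : labeling T k => phi y)).
rewrite -[k in k * _]card_ord -sum_nat_const; apply: eq_bigr => b _.
transitivity #|dist_fiber a b|; first by apply: eq_card => phi; rewrite !inE andbA.
rewrite (card_dist_fiber a b a a); apply: eq_card => phi; rewrite !inE.
by case: (eqVneq (phi x) a) => [-> | _]; rewrite ?eqxx ?andbT ?andbF //= eq_sym.
Qed.

End FixedPairRelabel.

Lemma card_setId_predC (X : finType) (A : {set X}) (P : pred X) :
  #|[set a in A | P a]| + #|[set a in A | ~~ P a]| = #|A|.
Proof.
rewrite -(cardsID [set a | P a] A) !setIdE setDE; congr (_ + #|A :&: _|).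
by apply/setP => a; rewrite !inE.
Qed.

Section EdgeCounts.
Variables (T : finType) (e : rel T) (x y : T) (k : nat).
Hypothesis xy : x != y.
Local Notation K := (Aut_fix2 e x y).
Local Notation G := (Aut_edge e x y).

Lemma relabel_edge_diag (phi : labeling T k) p : p \in G ->
  (relabel_action T k phi p x == relabel_action T k phi p y) = (phi x == phi y).
Proof.
move=> /groupVr /Aut_edge_fix_or_swap swap; rewrite !relabelE.
by case: swap => -[-> ->] //; rewrite eq_sym.
Qed.

Lemma dist_edge_offdiag (phi : labeling T k) : phi x != phi y ->
  (phi \in dist_set k G) = (phi \in dist_set k K).
Proof.
move=> phi_xy; rewrite !dist_setE; apply/forall_inP/forall_inP => phi_dist p pH.
  exact/phi_dist/(subsetP (Aut_fix2_sub_edge e x y)).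
apply/implyP => fix_p; suff pK : p \in K by exact: implyP (phi_dist p pK) fix_p.
apply: Aut_edge_fix_sub => //; have [[] // | [px _]] := Aut_edge_fix_or_swap pH.
by case/negP: phi_xy; rewrite -px -{2}(eqP fix_p) relabelE permK.
Qed.

Lemma D2_edge_mul_card :
  D2_edge e k x y * #|G| = #|[set phi in dist_set k K | phi x != phi y]|.
Proof.
rewrite /D2_edge card_eq_classes_setId => [|phi p pG]; last by rewrite relabel_edge_diag.
apply: eq_card => phi; apply/setIdP/setIdP => -[phi_dist phi_xy]; split => //.
  by rewrite -dist_edge_offdiag.
by rewrite dist_edge_offdiag.
Qed.

Lemma D1_add_D2_edge : D1_edge e k x y + D2_edge e k x y = D_edge e k x y.
Proof.
apply/eqP; rewrite -(eqn_pmul2r (cardG_gt0 G)) mulnDl /D1_edge /D2_edge /D_edge.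
rewrite !card_eq_classes_setId => [| phi p pG | phi p pG]; rewrite ?relabel_edge_diag //.
by rewrite card_setId_predC Dcount_mul_card.
Qed.

Lemma D2_edge_mul_2k : G != K -> D2_edge e k x y * (2 * k) = k.-1 * D_fix2 e k x y.
Proof.
move=> GneK; apply/eqP; rewrite -(eqn_pmul2r (cardG_gt0 K)); apply/eqP.
set dist := #|dist_set k K|.
set diag := #|[set phi in dist_set k K | phi x == phi y]|.
set off := #|[set phi in dist_set k K | phi x != phi y]|.
have dist_diag : dist = k * diag := card_dist_set_diag k xy (@Aut_fix2_fix T e x y).
have off_dist : off = dist - diag.
  by rewrite /dist -(card_setId_predC _ (fun phi : labeling T k => phi x == phi y)) addKn.
have D2_off : D2_edge e k x y * (2 * #|K|) = off by rewrite -card_Aut_edge ?D2_edge_mul_card.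
rewrite /D_fix2 -[RHS]mulnA Dcount_mul_card -/dist -mulnA mulnAC mulnA D2_off off_dist.
by rewrite mulnBl [diag * k]mulnC -dist_diag -{2}[dist]muln1 -mulnBr subn1 mulnC.
Qed.

End EdgeCounts.

Local Open Scope ring_scope.

Theorem lemma14 (T : finType) (e : rel T) (x y : T) :
  simple_graph e -> e x y ->
  Aut_edge e x y != Aut_fix2 e x y ->
  forall k : nat, (0 < k)%N ->
    ((D2_edge e k x y)%:R : rat)
      = ('C(k, 2))%:R * (D_fix2 e k x y)%:R / (k ^ 2)%:R
    /\ ((D1_edge e k x y)%:R : rat)
      = (D_edge e k x y)%:R - (k.-1)%:R * (D_fix2 e k x y)%:R / (2 * k)%:R.
Proof.
move=> [_ e_irr] e_xy GneK k k_gt0.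
have xy : x != y by apply: contraTneq e_xy => ->; rewrite e_irr.
have k_neq0 : k%:R != 0 :> rat by rewrite pnatr_eq0 -lt0n.
have D2E : (D2_edge e k x y)%:R = (k.-1)%:R * (D_fix2 e k x y)%:R / (2 * k)%:R :> rat.
  by rewrite -natrM -(D2_edge_mul_2k k xy GneK) natrM mulfK // natrM mulf_neq0.
have binE : ('C(k, 2))%:R = k%:R * (k.-1)%:R / 2 :> rat.
  have bin2E : ('C(k, 2) * 2 = k * k.-1)%N by rewrite (bin_ffact k 2) ffactnS ffactn1.
  by apply: canRL (mulfK _) _; rewrite ?pnatr_eq0 // -!natrM bin2E.
split; first by rewrite D2E binE natrX; field.
by rewrite -(D1_add_D2_edge e x y k) natrD -D2E addrK.
Qed.
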